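(* Let $\sigma < -2$ and $p > -1-\sigma$ be such that $a := \frac{\sigma+2}{1-p} = \frac12$, and let $c_a = \big(a(1-a)\big)^{1/(p-1)}$ and $u_a(x) = c_a x^a$. Then there is a positive solution $u \in C^2(0,+\infty)$ of $u''(x) + x^\sigma u(x)^p = 0$ for $x>0$ such that $u - u_a$ changes sign infinitely many times near $x=0$, $u/u_a$ is bounded on $(0,+\infty)$, and $u(x)/u_a(x)$ does not converge as $x \searrow 0$.
   Context: The function $u_a$ is itself a positive solution of the same equation on $(0,+\infty)$. *)

From Stdlib Require Import Reals Lra.
From Coquelicot Require Import Coquelicot.
Open Scope R_scope.

Definition expo_a (sigma p : R) : R := (sigma + 2) / (1 - p).

Definition c_a (sigma p : R) : R :=
  Rpower (expo_a sigma p * (1 - expo_a sigma p)) (1 / (p - 1)).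

Definition u_a (sigma p : R) (x : R) : R :=
  c_a sigma p * Rpower x (expo_a sigma p).

Definition C2_pos (u : R -> R) : Prop :=
  (forall x, 0 < x -> ex_derive u x) /\
  (forall x, 0 < x -> ex_derive (Derive u) x) /\
  (forall x, 0 < x -> continuous (Derive (Derive u)) x).

Definition changes_sign_inf_near_0 (f : R -> R) : Prop :=
  forall eps, 0 < eps ->
    (exists x, 0 < x < eps /\ 0 < f x) /\
    (exists y, 0 < y < eps /\ f y < 0).

(* With a = 1/2, the substitution u(x) = sqrt x * w(ln x) turns u'' + x^sigma u^p = 0 into the
   autonomous equation w'' = w/4 - w^p, whose equilibrium c_a corresponds to u_a, so that
   u/u_a = w(ln x)/c_a.  This equation conserves w'^2 + 2 V(w), where
   V(z) = - int_{c_a}^z (s/4 - s^p) ds vanishes at c_a and is positive on both sides of it.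
   Start at w(0) = c_a with energy E = min (V(c_a/2)) (V(2 c_a)) > 0.  Then w stays in
   (c_a/2, 2 c_a), so u/u_a is bounded, and w is far from c_a whenever |w'| is small.  Hence w
   cannot stay on one side of c_a as t -> -oo (it would be a bounded convex or concave function
   on a half-line whose second derivative is bounded away from 0 where its slope is small), and
   it cannot converge either, since near c_a the energy forces |w'| to be about sqrt E.  As
   ln x -> -oo when x -> 0, u - u_a changes sign infinitely often and u/u_a has no limit. *)

From Stdlib Require Import Reals Lra Lia Classical Factorial.
From Coquelicot Require Import Coquelicot.
Open Scope R_scope.

Lemma continuous_of_ex_derive (f : R -> R) x : ex_derive f x -> continuous f x.
Proof. apply (ex_derive_continuous (V := R_NormedModule) f). Qed.

Lemma continuous_of_is_derive (f : R -> R) x l : is_derive f x l -> continuous f x.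
Proof. intros H. apply continuous_of_ex_derive. exists l; exact H. Qed.

Lemma continuous_minus_R (f h : R -> R) x :
  continuous f x -> continuous h x -> continuous (fun y => f y - h y) x.
Proof. apply (continuous_minus (V := R_NormedModule) f h). Qed.

Lemma continuous_mult_R (f h : R -> R) x :
  continuous f x -> continuous h x -> continuous (fun y => f y * h y) x.
Proof. apply (continuous_mult (K := R_AbsRing) f h). Qed.

Lemma continuous_of_lipschitz (g : R -> R) (L : R) :
  (forall x y, Rabs (g x - g y) <= L * Rabs (x - y)) -> forall x, continuous g x.
Proof.
  intros HL x. apply continuity_pt_filterlim. intros eps Heps.
  assert (HL1 : 0 < Rabs L + 1) by (pose proof (Rabs_pos L); lra).
  exists (eps / (Rabs L + 1)). split; [apply Rdiv_lt_0_compat; lra |].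
  intros y [_ Hy]. simpl in *. unfold R_dist in *.
  apply Rle_lt_trans with (L * Rabs (y - x)); [apply HL |].
  apply Rle_lt_trans with ((Rabs L + 1) * Rabs (y - x)).
  - pose proof (Rle_abs L). pose proof (Rabs_pos (y - x)). nra.
  - apply Rmult_lt_reg_r with (/ (Rabs L + 1)); [apply Rinv_0_lt_compat; lra |].
    field_simplify; lra.
Qed.

Lemma continuous_of_unif_limit (F : R -> R) (f : nat -> R -> R) t :
  (forall n, continuous (f n) t) ->
  (forall eps, 0 < eps -> exists N, forall y, Rabs (y - t) <= 1 -> Rabs (F y - f N y) <= eps) ->
  continuous F t.
Proof.
  intros Hf Hu. apply continuity_pt_filterlim. intros eps Heps.
  destruct (Hu (eps / 3)) as [N HN]; [lra |].
  destruct (proj2 (continuity_pt_filterlim _ _) (Hf N) (eps / 3)) as [d [Hd Hfd]]; [lra |].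
  exists (Rmin d 1). split; [apply Rmin_pos; lra |].
  intros y [_ Hy]. simpl in *. unfold R_dist in *.
  destruct (Req_dec y t) as [-> | Hne]; [rewrite Rminus_eq_0, Rabs_R0; lra |].
  assert (Hyd : Rabs (y - t) < d) by (eapply Rlt_le_trans; [exact Hy | apply Rmin_l]).
  assert (Hy1 : Rabs (y - t) <= 1) by (pose proof (Rmin_r d 1); lra).
  specialize (Hfd y (conj (conj I (not_eq_sym Hne)) Hyd)). simpl in Hfd. unfold R_dist in Hfd.
  pose proof (HN y Hy1). pose proof (HN t ltac:(rewrite Rminus_eq_0, Rabs_R0; lra)).
  replace (F y - F t) with ((F y - f N y) + (f N y - f N t) + (f N t - F t)) by ring.
  pose proof (Rabs_triang (F y - f N y + (f N y - f N t)) (f N t - F t)).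
  pose proof (Rabs_triang (F y - f N y) (f N y - f N t)).
  rewrite (Rabs_minus_sym (f N t)) in *. lra.
Qed.

Lemma ex_RInt_of_continuous (h : R -> R) a b : (forall x, continuous h x) -> ex_RInt h a b.
Proof. intros H. apply (ex_RInt_continuous (V := R_CompleteNormedModule)). intros; apply H. Qed.

Lemma is_derive_RInt_of_continuous (h : R -> R) a t :
  (forall x, continuous h x) -> is_derive (fun s => RInt h a s) t (h t).
Proof.
  intros Hc. apply is_derive_RInt with (a := a); [| apply Hc].
  apply filter_forall. intro b.
  apply (RInt_correct (V := R_CompleteNormedModule)), ex_RInt_of_continuous, Hc.
Qed.

Lemma continuous_RInt_of_continuous (h : R -> R) a t :
  (forall x, continuous h x) -> continuous (fun s => RInt h a s) t.
Proof. intros Hc. eapply continuous_of_is_derive, is_derive_RInt_of_continuous, Hc. Qed.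

Lemma MVT_is_derive (f df : R -> R) a b : a < b -> (forall x, is_derive f x (df x)) ->
  exists xi, a <= xi <= b /\ f b - f a = df xi * (b - a).
Proof.
  intros Hab Hd. destruct (MVT_gen f a b df) as [xi [Hxi E]].
  - intros x _. apply Hd.
  - intros x _. apply continuity_pt_filterlim, (continuous_of_is_derive _ _ _ (Hd x)).
  - exists xi. rewrite Rmin_left, Rmax_right in Hxi by lra. auto.
Qed.

Lemma diff_ge_of_derive_ge (f df : R -> R) k a b : a <= b -> (forall x, is_derive f x (df x)) ->
  (forall x, a <= x <= b -> k <= df x) -> k * (b - a) <= f b - f a.
Proof.
  intros Hab Hd Hk. destruct (Req_dec a b) as [<- | Hne]; [lra |].
  destruct (MVT_is_derive f df a b) as [xi [Hxi ->]]; [lra | exact Hd |].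
  specialize (Hk xi Hxi). nra.
Qed.

Lemma diff_le_of_derive_le (f df : R -> R) k a b : a <= b -> (forall x, is_derive f x (df x)) ->
  (forall x, a <= x <= b -> df x <= k) -> f b - f a <= k * (b - a).
Proof.
  intros Hab Hd Hk. destruct (Req_dec a b) as [<- | Hne]; [lra |].
  destruct (MVT_is_derive f df a b) as [xi [Hxi ->]]; [lra | exact Hd |].
  specialize (Hk xi Hxi). nra.
Qed.

Lemma derive_zero_const (f : R -> R) : (forall x, is_derive f x 0) -> forall x, f x = f 0.
Proof.
  intros Hd.
  assert (Heq : forall a b, a <= b -> f b = f a).
  { intros a b Hab.
    pose proof (diff_ge_of_derive_ge f (fun _ => 0) 0 a b Hab Hd (fun _ _ => Rle_refl 0)).
    pose proof (diff_le_of_derive_le f (fun _ => 0) 0 a b Hab Hd (fun _ _ => Rle_refl 0)).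
    lra. }
  intros x. destruct (Rle_or_lt 0 x) as [Hx | Hx]; [apply Heq, Hx | symmetry; apply Heq; lra].
Qed.

Lemma lipschitz_of_derive_bound (f df : R -> R) (a b M : R) :
  (forall x, a <= x <= b -> is_derive f x (df x)) -> (forall x, a <= x <= b -> Rabs (df x) <= M) ->
  forall x y, a <= x <= b -> a <= y <= b -> Rabs (f x - f y) <= M * Rabs (x - y).
Proof.
  intros Hd HM x y Hx Hy.
  assert (Hin : forall z, Rmin y x <= z <= Rmax y x -> a <= z <= b).
  { intros z [H1 H2]. split.
    - eapply Rle_trans; [| exact H1]. apply Rmin_glb; lra.
    - eapply Rle_trans; [exact H2 |]. apply Rmax_lub; lra. }
  destruct (MVT_gen f y x df) as [xi [Hxi ->]].
  - intros z Hz. apply Hd, Hin. lra.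
  - intros z Hz. apply continuity_pt_filterlim, (continuous_of_is_derive _ _ (df z)), Hd, Hin, Hz.
  - rewrite Rabs_mult. apply Rmult_le_compat_r; [apply Rabs_pos | apply HM, Hin, Hxi].
Qed.

Lemma abs_RInt_0_le_pow (h : R -> R) (K : R) (k : nat) (s : R) :
  (forall x, continuous h x) -> 0 <= K ->
  (forall r, Rabs r <= Rabs s -> Rabs (h r) <= K * Rabs r ^ k) ->
  Rabs (RInt h 0 s) <= K * Rabs s ^ S k / INR (S k).
Proof.
  intros Hc HK Hb.
  assert (HS : INR (S k) <> 0) by (apply not_0_INR; lia).
  assert (Hint : forall a b, is_RInt h a b (RInt h a b)).
  { intros a b. apply (RInt_correct (V := R_CompleteNormedModule)), ex_RInt_of_continuous, Hc. }
  destruct (Rle_or_lt 0 s) as [Hs | Hs].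
  - rewrite (Rabs_pos_eq s Hs).
    apply (norm_RInt_le h (fun x => K * x ^ k) 0 s _ _ Hs); [| apply Hint |].
    + intros x Hx. specialize (Hb x). rewrite (Rabs_pos_eq x) in Hb by lra.
      apply Hb. rewrite Rabs_pos_eq; lra.
    + replace (K * s ^ S k / INR (S k)) with
        (minus (K * s ^ S k / INR (S k)) (K * 0 ^ S k / INR (S k)))
        by (unfold minus, plus, opp; simpl; field; exact HS).
      apply (is_RInt_derive (fun x => K * x ^ S k / INR (S k))).
      * intros x _. auto_derive; [exact I |].
        change (match k with 0%nat => 1 | S _ => INR k + 1 end) with (INR (S k)). field. exact HS.
      * intros x _. apply continuous_of_ex_derive. auto_derive. exact I.
  - rewrite (Rabs_left s Hs), <- opp_RInt_swap by (exists (RInt h s 0); apply Hint).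
    change (Rabs (- RInt h s 0) <= K * (- s) ^ S k / INR (S k)). rewrite Rabs_Ropp.
    apply (norm_RInt_le h (fun x => K * (- x) ^ k) s 0); [lra | | apply Hint |].
    + intros x Hx. specialize (Hb x). rewrite (Rabs_left1 x) in Hb by lra.
      apply Hb. rewrite (Rabs_left s) by lra. lra.
    + replace (K * (- s) ^ S k / INR (S k)) with
        (minus (- K * (- 0) ^ S k / INR (S k)) (- K * (- s) ^ S k / INR (S k)))
        by (unfold minus, plus, opp; simpl; field; exact HS).
      apply (is_RInt_derive (fun x => - K * (- x) ^ S k / INR (S k))).
      * intros x _. auto_derive; [exact I |].
        change (match k with 0%nat => 1 | S _ => INR k + 1 end) with (INR (S k)). field. exact HS.
      * intros x _. apply continuous_of_ex_derive. auto_derive. exact I.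
Qed.

(** * Picard iteration *)

Definition RInt2 (h : R -> R) (t : R) : R := RInt (fun s => RInt h 0 s) 0 t.

Section RInt2.
Variable h : R -> R.
Hypothesis h_continuous : forall x, continuous h x.

Lemma is_derive_RInt2 t : is_derive (RInt2 h) t (RInt h 0 t).
Proof.
  apply is_derive_RInt_of_continuous. intros x.
  apply continuous_RInt_of_continuous, h_continuous.
Qed.

Lemma continuous_RInt2 t : continuous (RInt2 h) t.
Proof. exact (continuous_of_is_derive _ _ _ (is_derive_RInt2 t)). Qed.

Lemma abs_RInt2_le_pow (K : R) (k : nat) (t : R) : 0 <= K ->
  (forall r, Rabs r <= Rabs t -> Rabs (h r) <= K * Rabs r ^ k) ->
  Rabs (RInt2 h t) <= K * Rabs t ^ S (S k) / (INR (S k) * INR (S (S k))).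
Proof.
  intros HK Hb.
  assert (Hk : 0 < INR (S k)) by (apply lt_0_INR; lia).
  replace (K * Rabs t ^ S (S k) / (INR (S k) * INR (S (S k))))
    with (K / INR (S k) * Rabs t ^ S (S k) / INR (S (S k)))
    by (field; split; apply not_0_INR; lia).
  apply abs_RInt_0_le_pow.
  - intros x. apply continuous_RInt_of_continuous, h_continuous.
  - apply Rdiv_le_0_compat; lra.
  - intros s Hs. replace (K / INR (S k) * Rabs s ^ S k) with (K * Rabs s ^ S k / INR (S k))
      by (field; lra).
    apply abs_RInt_0_le_pow; auto.
    intros r Hr. apply Hb. lra.
Qed.

End RInt2.

Lemma RInt2_minus (h1 h2 : R -> R) t :
  (forall x, continuous h1 x) -> (forall x, continuous h2 x) ->
  RInt2 h1 t - RInt2 h2 t = RInt2 (fun r => h1 r - h2 r) t.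
Proof.
  intros H1 H2. unfold RInt2.
  rewrite (RInt_ext (fun s => RInt (fun r => h1 r - h2 r) 0 s)
                    (fun s => RInt h1 0 s - RInt h2 0 s)).
  - symmetry. apply (RInt_minus (V := R_CompleteNormedModule));
      apply ex_RInt_of_continuous; intros x; apply continuous_RInt_of_continuous; assumption.
  - intros x _. apply (RInt_minus (V := R_CompleteNormedModule));
      apply ex_RInt_of_continuous; assumption.
Qed.

Definition telescope_lim (f : nat -> R -> R) (t : R) : R :=
  f 0%nat t + Series (fun k => f (S k) t - f k t).

Lemma telescope_lim_unif (f : nat -> R -> R) (c : nat -> R) (D : R -> Prop) :
  ex_series c -> (forall n t, D t -> Rabs (f (S n) t - f n t) <= c n) ->
  forall eps, 0 < eps -> exists N, forall n t, (N <= n)%nat -> D t ->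
    Rabs (telescope_lim f t - f n t) <= eps.
Proof.
  intros Hc Hb eps Heps.
  assert (Htail : forall k, ex_series (fun j => c (S k + j)%nat))
    by (intros k; apply ex_series_incr_n; auto).
  destruct (proj1 (filterlim_locally _ _) (Series_correct _ Hc) (mkposreal eps Heps))
    as [N0 HN0].
  exists (S N0). intros [| k] t Hk Ht; [lia |].
  set (d := fun j => f (S j) t - f j t).
  assert (Hd : ex_series d).
  { apply (ex_series_le (K := R_AbsRing) (V := R_CompleteNormedModule) d c); auto.
    intros j. apply Hb, Ht. }
  assert (Htel : forall m, f (S m) t = f 0%nat t + sum_f_R0 d m)
    by (intros m; induction m; simpl; unfold d in *; lra).
  unfold telescope_lim. fold d.
  rewrite Htel, (Series_incr_n d (S k)) by (auto; lia). simpl pred.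
  replace (f 0%nat t + (sum_f_R0 d k + Series (fun j => d (S k + j)%nat)) -
    (f 0%nat t + sum_f_R0 d k)) with (Series (fun j => d (S k + j)%nat)) by ring.
  eapply Rle_trans; [apply Series_Rabs |].
  { apply (ex_series_le (K := R_AbsRing) (V := R_CompleteNormedModule) _
            (fun j => c (S k + j)%nat)); [intros j | apply Htail].
    unfold norm; simpl. unfold abs; simpl. rewrite Rabs_Rabsolu. apply Hb, Ht. }
  eapply Rle_trans; [apply (Series_le _ (fun j => c (S k + j)%nat)); auto |].
  { intros j. split; [apply Rabs_pos | apply Hb, Ht]. }
  specialize (HN0 k ltac:(lia)). change (Rabs (sum_n c k - Series c) < eps) in HN0.
  rewrite (Series_incr_n c (S k)), sum_n_Reals in HN0 by (auto; lia). simpl pred in HN0.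
  pose proof (Rle_abs (Series (fun j => c (S k + j)%nat))).
  rewrite Rabs_minus_sym in HN0.
  replace (sum_f_R0 c k + Series (fun j => c (S k + j)%nat) - sum_f_R0 c k)
    with (Series (fun j => c (S k + j)%nat)) in HN0 by ring.
  lra.
Qed.

Section Picard.
Variables (g : R -> R) (B L w0 v0 : R).
Hypothesis g_bounded : forall x, Rabs (g x) <= B.
Hypothesis g_lipschitz : forall x y, Rabs (g x - g y) <= L * Rabs (x - y).

Let B_ge0 : 0 <= B.
Proof. pose proof (g_bounded 0). pose proof (Rabs_pos (g 0)). lra. Qed.

Let L_ge0 : 0 <= L.
Proof.
  pose proof (g_lipschitz 1 0) as H. pose proof (Rabs_pos (g 1 - g 0)).
  rewrite Rminus_0_r, Rabs_R1 in H. lra.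
Qed.

Let g_continuous : forall x, continuous g x := continuous_of_lipschitz g L g_lipschitz.

Let continuous_g_comp (h : R -> R) : (forall x, continuous h x) ->
  forall x, continuous (fun r => g (h r)) x.
Proof. intros Hh x. apply continuous_comp; [apply Hh | apply g_continuous]. Qed.

Let picard_coef_step n X : 0 <= X ->
  L * (B / 2 * (L ^ n / INR (fact n))) * X / (INR (S (2 * n + 2)) * INR (S (S (2 * n + 2))))
  <= B / 2 * (L ^ S n / INR (fact (S n))) * X.
Proof.
  intros HX.
  assert (Hf : 0 < INR (fact n)) by apply lt_0_INR, lt_O_fact.
  assert (Hn : 0 < INR (S n)) by (apply lt_0_INR; lia).
  assert (Hle : INR (S n) <= INR (S (2 * n + 2)) * INR (S (S (2 * n + 2)))).
  { rewrite <- mult_INR. apply le_INR. nia. }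
  assert (HK : 0 <= L * (B / 2 * (L ^ n / INR (fact n))) * X).
  { apply Rmult_le_pos; [| exact HX]. apply Rmult_le_pos; [exact L_ge0 |].
    apply Rmult_le_pos; [lra | apply Rdiv_le_0_compat; [apply pow_le, L_ge0 | exact Hf]]. }
  replace (B / 2 * (L ^ S n / INR (fact (S n))) * X)
    with (L * (B / 2 * (L ^ n / INR (fact n))) * X / INR (S n))
    by (rewrite fact_simpl, mult_INR; change (L ^ S n) with (L * L ^ n); field; lra).
  apply Rmult_le_compat_l; [exact HK |]. apply Rinv_le_contravar; [exact Hn | exact Hle].
Qed.

Fixpoint picard (n : nat) : R -> R :=
  match n with
  | O => fun t => w0 + v0 * t
  | S n => fun t => w0 + v0 * t + RInt2 (fun r => g (picard n r)) t
  end.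

Lemma continuous_picard n t : continuous (picard n) t.
Proof.
  revert t; induction n as [| n IH]; intros t; simpl.
  - apply continuous_of_ex_derive. auto_derive. exact I.
  - apply (continuous_plus (fun t => w0 + v0 * t)).
    + apply continuous_of_ex_derive. auto_derive. exact I.
    + apply continuous_RInt2, continuous_g_comp, IH.
Qed.

Lemma picard_increment_bound n t :
  Rabs (picard (S n) t - picard n t) <= B / 2 * (L ^ n / INR (fact n)) * Rabs t ^ (2 * n + 2).
Proof.
  revert t; induction n as [| n IH]; intros t.
  - replace (picard 1 t - picard 0 t) with (RInt2 (fun r => g (picard 0 r)) t) by (simpl; ring).
    replace (B / 2 * (L ^ 0 / INR (fact 0)) * Rabs t ^ (2 * 0 + 2))
      with (B * Rabs t ^ 2 / (INR 1 * INR 2)) by (simpl; field).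
    apply (abs_RInt2_le_pow _ (continuous_g_comp _ (continuous_picard 0)) B 0); auto.
    intros r _. rewrite pow_O, Rmult_1_r. apply g_bounded.
  - replace (picard (S (S n)) t - picard (S n) t)
      with (RInt2 (fun r => g (picard (S n) r)) t - RInt2 (fun r => g (picard n r)) t)
      by (simpl; ring).
    rewrite RInt2_minus by (apply continuous_g_comp, continuous_picard).
    set (K := B / 2 * (L ^ n / INR (fact n))).
    assert (HK : 0 <= K).
    { apply Rmult_le_pos; [lra |].
      apply Rdiv_le_0_compat; [apply pow_le, L_ge0 | apply lt_0_INR, lt_O_fact]. }
    apply Rle_trans with (L * K * Rabs t ^ S (S (2 * n + 2))
                          / (INR (S (2 * n + 2)) * INR (S (S (2 * n + 2))))).
    + apply abs_RInt2_le_pow; [| apply Rmult_le_pos; [exact L_ge0 | exact HK] |].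
      * intros x. apply continuous_minus_R; apply continuous_g_comp, continuous_picard.
      * intros r _. eapply Rle_trans; [apply g_lipschitz |].
        rewrite Rmult_assoc. apply Rmult_le_compat_l; [exact L_ge0 | apply IH].
    + replace (2 * S n + 2)%nat with (S (S (2 * n + 2))) by lia.
      apply picard_coef_step, pow_le, Rabs_pos.
Qed.

Lemma picard_lim_unif T eps : 0 < eps -> exists N, forall n t, (N <= n)%nat -> Rabs t <= T ->
  Rabs (telescope_lim picard t - picard n t) <= eps.
Proof.
  apply (telescope_lim_unif picard (fun n => B / 2 * T ^ 2 * (/ INR (fact n) * (L * T ^ 2) ^ n))).
  - apply (ex_series_scal_l (K := R_AbsRing) (V := R_NormedModule)).
    destruct (exist_exp (L * T ^ 2)) as [l Hl]. exists l. apply is_series_Reals, Hl.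
  - intros n t Ht. eapply Rle_trans; [apply picard_increment_bound |].
    assert (Ha : 0 <= Rabs t) by apply Rabs_pos.
    assert (Hf : 0 < / INR (fact n)) by apply Rinv_0_lt_compat, lt_0_INR, lt_O_fact.
    replace (B / 2 * T ^ 2 * (/ INR (fact n) * (L * T ^ 2) ^ n))
      with (B / 2 * (L ^ n / INR (fact n)) * T ^ (2 * n + 2))
      by (rewrite Rpow_mult_distr, (Nat.add_comm _ 2), pow_add, pow_mult; field;
          apply not_0_INR, fact_neq_0).
    apply Rmult_le_compat_l; [| apply pow_incr; lra].
    apply Rmult_le_pos; [lra |]. apply Rmult_le_pos; [apply pow_le, L_ge0 | lra].
Qed.

Lemma continuous_picard_lim t : continuous (telescope_lim picard) t.
Proof.
  apply (continuous_of_unif_limit _ picard); [intros n; apply continuous_picard |].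
  intros eps Heps. destruct (picard_lim_unif (Rabs t + 1) eps Heps) as [N HN].
  exists N. intros y Hy. apply HN; [lia |].
  pose proof (Rabs_triang_inv y t). lra.
Qed.

Lemma picard_lim_fixpoint t :
  telescope_lim picard t = w0 + v0 * t + RInt2 (fun r => g (telescope_lim picard r)) t.
Proof.
  set (w := telescope_lim picard).
  assert (Hw : forall x, continuous (fun r => g (w r)) x)
    by apply continuous_g_comp, continuous_picard_lim.
  apply cond_eq. intros eps Heps.
  set (e := eps / (2 * (1 + L * t ^ 2))).
  assert (HD : 0 < 1 + L * t ^ 2) by (pose proof (pow2_ge_0 t); nra).
  assert (He : 0 < e) by (apply Rdiv_lt_0_compat; lra).
  destruct (picard_lim_unif (Rabs t) e He) as [N HN].
  assert (Hpic : Rabs (picard (S N) t - (w0 + v0 * t + RInt2 (fun r => g (w r)) t))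
                 <= L * e * Rabs t ^ 2 / (INR 1 * INR 2)).
  { replace (picard (S N) t - (w0 + v0 * t + RInt2 (fun r => g (w r)) t))
      with (RInt2 (fun r => g (picard N r)) t - RInt2 (fun r => g (w r)) t) by (simpl; ring).
    rewrite RInt2_minus by (apply continuous_g_comp, continuous_picard || exact Hw).
    apply abs_RInt2_le_pow; [| apply Rmult_le_pos; lra |].
    - intros x. apply continuous_minus_R; [apply continuous_g_comp, continuous_picard | apply Hw].
    - intros r Hr. eapply Rle_trans; [apply g_lipschitz |].
      rewrite pow_O, Rmult_1_r. apply Rmult_le_compat_l; [exact L_ge0 |].
      rewrite Rabs_minus_sym. exact (HN N r (le_n N) Hr). }
  assert (Hlim : Rabs (w t - picard (S N) t) <= e)
    by exact (HN (S N) t (le_S _ _ (le_n N)) (Rle_refl _)).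
  replace (w t - (w0 + v0 * t + RInt2 (fun r => g (w r)) t))
    with ((w t - picard (S N) t) + (picard (S N) t - (w0 + v0 * t + RInt2 (fun r => g (w r)) t)))
    by ring.
  eapply Rle_lt_trans; [apply Rabs_triang |].
  rewrite pow2_abs in Hpic. replace (INR 1 * INR 2) with 2 in Hpic by (simpl; ring).
  assert (eps = 2 * e + 2 * (L * e * t ^ 2)) by (unfold e; field; lra).
  assert (0 <= L * e * t ^ 2)
    by (pose proof (pow2_ge_0 t); apply Rmult_le_pos; [apply Rmult_le_pos |]; lra).
  lra.
Qed.

Theorem picard_global_solution : exists w w1 : R -> R,
  w 0 = w0 /\ w1 0 = v0 /\
  (forall t, is_derive w t (w1 t)) /\ (forall t, is_derive w1 t (g (w t))).
Proof.
  set (w := telescope_lim picard).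
  assert (Hw : forall x, continuous (fun r => g (w r)) x)
    by apply continuous_g_comp, continuous_picard_lim.
  exists w, (fun t => v0 + RInt (fun r => g (w r)) 0 t).
  assert (Hw1 : forall t, is_derive (fun t => v0 + RInt (fun r => g (w r)) 0 t) t (g (w t))).
  { intros t. replace (g (w t)) with (0 + g (w t)) by ring.
    apply (is_derive_plus (fun _ => v0)); [auto_derive; [exact I | ring] |].
    apply (is_derive_RInt_of_continuous (fun r => g (w r))), Hw. }
  split; [| split; [| split]]; try exact Hw1.
  - unfold w. rewrite picard_lim_fixpoint. unfold RInt2. rewrite RInt_point.
    change (@zero R_CompleteNormedModule) with 0. ring.
  - rewrite RInt_point. change (@zero R_CompleteNormedModule) with 0. ring.
  - intros t. apply (is_derive_ext (fun t => w0 + v0 * t + RInt2 (fun r => g (w r)) t)).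
    + intros s. symmetry. apply picard_lim_fixpoint.
    + apply (is_derive_plus (fun t => w0 + v0 * t)); [auto_derive; [exact I | ring] |].
      apply is_derive_RInt2, Hw.
Qed.

End Picard.

(** * Bounded concave functions on a left half-line *)

Section ConcaveRay.
Variables (y y1 y2 : R -> R) (T A : R).
Hypothesis y_deriv : forall t, is_derive y t (y1 t).
Hypothesis y1_deriv : forall t, is_derive y1 t (y2 t).
Hypothesis y_bounded : forall t, t <= T -> Rabs (y t) <= A.
Hypothesis y2_nonpos : forall t, t <= T -> y2 t <= 0.

Let y_range t : t <= T -> - A <= y t <= A.
Proof. intros Ht. apply Rabs_le_between, y_bounded, Ht. Qed.

Let A_nonneg : 0 <= A.
Proof. pose proof (y_range T (Rle_refl T)). lra. Qed.

Lemma concave_deriv_antitone a b : a <= b -> b <= T -> y1 b <= y1 a.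
Proof.
  intros Hab HbT.
  pose proof (diff_le_of_derive_le y1 y2 0 a b Hab y1_deriv (fun x Hx => y2_nonpos x ltac:(lra))).
  lra.
Qed.

Lemma bounded_concave_deriv_nonpos t : t <= T -> y1 t <= 0.
Proof.
  intros Ht. apply Rnot_lt_le. intros Hpos.
  set (s := t - (2 * A + 1) / y1 t).
  assert (Hs : y1 t * (t - s) = 2 * A + 1) by (unfold s; field; lra).
  assert (Hst : s <= t).
  { unfold s. assert (0 < (2 * A + 1) / y1 t) by (apply Rdiv_lt_0_compat; lra). lra. }
  pose proof (diff_ge_of_derive_ge y y1 (y1 t) s t Hst y_deriv
                (fun x Hx => concave_deriv_antitone x t (proj2 Hx) Ht)).
  pose proof (y_range s ltac:(lra)). pose proof (y_range t Ht). lra.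
Qed.

Lemma bounded_concave_deriv_ge t : t <= T -> - y1 t * (T - t) <= 2 * A.
Proof.
  intros Ht.
  pose proof (diff_le_of_derive_le y y1 (y1 t) t T Ht y_deriv
                (fun x Hx => concave_deriv_antitone t x (proj1 Hx) (proj2 Hx))).
  pose proof (y_range t Ht). pose proof (y_range T (Rle_refl T)). lra.
Qed.

Lemma bounded_concave_ray_not_strict (kap del : R) : 0 < kap -> 0 < del ->
  ~ (forall t, t <= T -> y1 t ^ 2 <= del -> y2 t <= - kap).
Proof.
  intros Hkap Hdel Hstrict.
  (* Far to the left y' lies in (-eps, 0], so y'' <= -kap there; going back by 1/kap then
     raises y' by 1, making it positive. *)
  set (eps := Rmin 1 del).
  assert (He : 0 < eps) by (apply Rmin_pos; lra).
  assert (He1 : eps <= 1) by apply Rmin_l.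
  assert (He2 : eps <= del) by apply Rmin_r.
  set (t1 := T - (2 * A / eps + 1)).
  assert (Hq : eps * (2 * A / eps) = 2 * A) by (field; lra).
  assert (Hq0 : 0 <= 2 * A / eps) by (apply Rdiv_le_0_compat; lra).
  assert (Hflat : forall t, t <= t1 -> - y1 t < eps).
  { intros t Ht. pose proof (bounded_concave_deriv_ge t ltac:(unfold t1 in Ht; lra)).
    apply Rnot_le_lt. intros Hge.
    assert (eps * (T - t) <= - y1 t * (T - t)) by (apply Rmult_le_compat_r; unfold t1 in Ht; lra).
    unfold t1 in Ht. nra. }
  assert (Hconc : forall t, t <= t1 -> y2 t <= - kap).
  { intros t Ht. apply Hstrict; [unfold t1 in Ht; lra |].
    pose proof (Hflat t Ht).
    pose proof (bounded_concave_deriv_nonpos t ltac:(unfold t1 in Ht; lra)).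
    simpl. nra. }
  assert (Hh : 0 < / kap) by (apply Rinv_0_lt_compat, Hkap).
  pose proof (diff_le_of_derive_le y1 y2 (- kap) (t1 - / kap) t1 ltac:(lra) y1_deriv
                (fun x Hx => Hconc x (proj2 Hx))) as Hdrop.
  replace (- kap * (t1 - (t1 - / kap))) with (-1) in Hdrop by (field; lra).
  pose proof (Hflat t1 (Rle_refl t1)).
  pose proof (bounded_concave_deriv_nonpos (t1 - / kap) ltac:(unfold t1; lra)).
  lra.
Qed.

End ConcaveRay.

(** * The oscillator w'' = w/4 - w^p *)

Lemma is_lim_m_infty_eventually (w : R -> R) (l eps : R) : is_lim w m_infty l -> 0 < eps ->
  exists T, forall t, t < T -> Rabs (w t - l) < eps.
Proof. intros Hl Heps. exact (proj2 (is_lim_spec w m_infty l) Hl (mkposreal eps Heps)). Qed.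

Lemma is_lim_m_infty_oscillating (w : R -> R) (l c : R) : is_lim w m_infty l ->
  (forall T, exists t, t < T /\ c < w t) -> (forall T, exists t, t < T /\ w t < c) -> l = c.
Proof.
  intros Hl Habove Hbelow. apply cond_eq. intros eps Heps.
  destruct (is_lim_m_infty_eventually w l eps Hl Heps) as [T HT].
  destruct (Habove T) as [t1 [Ht1 H1]], (Hbelow T) as [t2 [Ht2 H2]].
  destruct (Rabs_def2 _ _ (HT t1 Ht1)), (Rabs_def2 _ _ (HT t2 Ht2)).
  apply Rabs_def1; lra.
Qed.

Section Oscillator.
Variable p : R.
Hypothesis p_gt1 : 1 < p.

(* The value of [c_a] for [a = 1/2]. *)
Definition equil : R := Rpower (1 / 4) (1 / (p - 1)).
Definition force (z : R) : R := z / 4 - Rpower z p.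

Lemma equil_pos : 0 < equil.
Proof. unfold equil, Rpower. apply exp_pos. Qed.

Lemma equil_pow : Rpower equil (p - 1) = 1 / 4.
Proof.
  unfold equil. rewrite Rpower_mult.
  replace (1 / (p - 1) * (p - 1)) with 1 by (field; lra).
  apply Rpower_1. lra.
Qed.

Let Rpower_pm1_lt a b : 0 < a < b -> Rpower a (p - 1) < Rpower b (p - 1).
Proof. intros H. apply Rlt_Rpower_l; [lra | exact H]. Qed.

Let Rpower_pm1_le a b : 0 < a <= b -> Rpower a (p - 1) <= Rpower b (p - 1).
Proof. intros H. apply Rle_Rpower_l; [lra | exact H]. Qed.

Lemma force_eq z : 0 < z -> force z = z * (1 / 4 - Rpower z (p - 1)).
Proof.
  intros Hz. unfold force.
  replace (Rpower z p) with (Rpower z (1 + (p - 1))) by (f_equal; ring).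
  rewrite Rpower_plus, Rpower_1 by exact Hz. field.
Qed.

Lemma force_nonneg z : 0 < z <= equil -> 0 <= force z.
Proof.
  intros Hz. rewrite force_eq by lra.
  pose proof (Rpower_pm1_le z equil Hz). rewrite equil_pow in *. nra.
Qed.

Lemma force_pos z : 0 < z < equil -> 0 < force z.
Proof.
  intros Hz. rewrite force_eq by lra.
  pose proof (Rpower_pm1_lt z equil Hz). rewrite equil_pow in *. nra.
Qed.

Lemma force_nonpos z : equil <= z -> force z <= 0.
Proof.
  intros Hz. pose proof equil_pos. rewrite force_eq by lra.
  pose proof (Rpower_pm1_le equil z ltac:(lra)). rewrite equil_pow in *. nra.
Qed.

Lemma force_neg z : equil < z -> force z < 0.
Proof.
  intros Hz. pose proof equil_pos. rewrite force_eq by lra.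
  pose proof (Rpower_pm1_lt equil z ltac:(lra)). rewrite equil_pow in *. nra.
Qed.

Lemma force_ge_pos a b : 0 < a -> 0 < b < equil ->
  exists kap, 0 < kap /\ forall z, a <= z <= b -> kap <= force z.
Proof.
  intros Ha Hb. pose proof (Rpower_pm1_lt b equil Hb). rewrite equil_pow in *.
  exists (a * (1 / 4 - Rpower b (p - 1))). split; [nra |].
  intros z Hz. rewrite force_eq by lra.
  pose proof (Rpower_pm1_le z b ltac:(lra)). nra.
Qed.

Lemma force_le_neg a : equil < a ->
  exists kap, 0 < kap /\ forall z, a <= z -> force z <= - kap.
Proof.
  intros Ha. pose proof equil_pos. pose proof (Rpower_pm1_lt equil a ltac:(lra)).
  rewrite equil_pow in *.
  exists (- (a * (1 / 4 - Rpower a (p - 1)))). split; [nra |].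
  intros z Hz. rewrite force_eq by lra.
  pose proof (Rpower_pm1_le a z ltac:(lra)). nra.
Qed.

Lemma is_derive_force z : 0 < z -> is_derive force z (1 / 4 - p * Rpower z (p - 1)).
Proof.
  intros Hz. apply (is_derive_minus (fun z => z / 4) (fun z => Rpower z p)).
  - auto_derive; [exact I | field].
  - apply is_derive_Reals, derivable_pt_lim_power, Hz.
Qed.

Lemma force_lipschitz x y :
  equil / 2 <= x <= 2 * equil -> equil / 2 <= y <= 2 * equil ->
  Rabs (force x - force y) <= (1 / 4 + p * Rpower (2 * equil) (p - 1)) * Rabs (x - y).
Proof.
  pose proof equil_pos.
  apply (lipschitz_of_derive_bound _ (fun z => 1 / 4 - p * Rpower z (p - 1))).
  - intros z Hz. apply is_derive_force. lra.
  - intros z Hz. pose proof (Rpower_pm1_le z (2 * equil) ltac:(lra)).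
    assert (0 < Rpower z (p - 1)) by (unfold Rpower; apply exp_pos).
    apply Rabs_le. split; nra.
Qed.

Lemma force_bounded z : equil / 2 <= z <= 2 * equil ->
  Rabs (force z) <= 2 * equil / 4 + Rpower (2 * equil) p.
Proof.
  intros Hz. pose proof equil_pos. unfold force.
  pose proof (Rle_Rpower_l z (2 * equil) p ltac:(lra) ltac:(lra)).
  assert (0 < Rpower z p) by (unfold Rpower; apply exp_pos).
  apply Rabs_le. split; lra.
Qed.

Definition clamp (z : R) : R := Rmax (equil / 2) (Rmin (2 * equil) z).

Ltac clamp_cases :=
  pose proof equil_pos; unfold clamp, Rmax, Rmin in *;
  repeat destruct Rle_dec; try unfold Rabs; repeat destruct Rcase_abs; lra.

Lemma clamp_range z : equil / 2 <= clamp z <= 2 * equil.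
Proof. clamp_cases. Qed.

Lemma clamp_id z : equil / 2 <= z <= 2 * equil -> clamp z = z.
Proof. intros. clamp_cases. Qed.

Lemma clamp_le_equil z : z <= equil -> clamp z <= equil.
Proof. intros. clamp_cases. Qed.

Lemma clamp_ge_equil z : equil <= z -> equil <= clamp z.
Proof. intros. clamp_cases. Qed.

Lemma clamp_lipschitz x y : Rabs (clamp x - clamp y) <= Rabs (x - y).
Proof. clamp_cases. Qed.

(* Clamping makes the force bounded and globally Lipschitz, as Picard iteration needs; the
   energy bound keeps the orbit where [clamp] is the identity. *)
Definition force_clamped (z : R) : R := force (clamp z).

Lemma force_clamped_bounded : exists B, forall z, Rabs (force_clamped z) <= B.
Proof. eexists. intros z. apply force_bounded, clamp_range. Qed.

Lemma force_clamped_lipschitz : exists L, forall x y,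
  Rabs (force_clamped x - force_clamped y) <= L * Rabs (x - y).
Proof.
  exists (1 / 4 + p * Rpower (2 * equil) (p - 1)). intros x y.
  assert (0 <= 1 / 4 + p * Rpower (2 * equil) (p - 1)).
  { assert (0 < Rpower (2 * equil) (p - 1)) by (unfold Rpower; apply exp_pos). nra. }
  eapply Rle_trans; [apply force_lipschitz; apply clamp_range |].
  apply Rmult_le_compat_l; [assumption | apply clamp_lipschitz].
Qed.

Lemma continuous_force_clamped z : continuous force_clamped z.
Proof.
  destruct force_clamped_lipschitz as [L HL]. exact (continuous_of_lipschitz _ L HL z).
Qed.

Lemma force_clamped_nonneg z : z <= equil -> 0 <= force_clamped z.
Proof.
  intros Hz. pose proof (clamp_range z). pose proof (clamp_le_equil z Hz). pose proof equil_pos.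
  apply force_nonneg. lra.
Qed.

Lemma force_clamped_nonpos z : equil <= z -> force_clamped z <= 0.
Proof. intros Hz. apply force_nonpos, clamp_ge_equil, Hz. Qed.

Definition potential (z : R) : R := - RInt force_clamped equil z.

Lemma is_derive_potential z : is_derive potential z (- force_clamped z).
Proof.
  apply (is_derive_opp (fun z => RInt force_clamped equil z)).
  apply is_derive_RInt_of_continuous, continuous_force_clamped.
Qed.

Lemma potential_equil : potential equil = 0.
Proof.
  unfold potential. rewrite RInt_point. change (@zero R_CompleteNormedModule) with 0. ring.
Qed.

Lemma potential_left_pos : 0 < potential (equil / 2).
Proof.
  pose proof equil_pos. unfold potential.
  change (0 < opp (RInt force_clamped equil (equil / 2))).
  rewrite opp_RInt_swap by (apply ex_RInt_of_continuous, continuous_force_clamped).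
  apply RInt_gt_0; [lra | | intros; apply continuous_force_clamped].
  intros z Hz. unfold force_clamped. rewrite clamp_id by lra. apply force_pos. lra.
Qed.

Lemma potential_right_pos : 0 < potential (2 * equil).
Proof.
  pose proof equil_pos. unfold potential.
  change (0 < opp (RInt force_clamped equil (2 * equil))).
  rewrite <- RInt_opp by (apply ex_RInt_of_continuous, continuous_force_clamped).
  apply RInt_gt_0; [lra | |].
  - intros z Hz. unfold force_clamped. rewrite clamp_id by lra.
    pose proof (force_neg z ltac:(lra)). simpl. unfold opp; simpl. lra.
  - intros z _. apply (continuous_opp force_clamped), continuous_force_clamped.
Qed.

Definition level : R := Rmin (potential (equil / 2)) (potential (2 * equil)).

Lemma level_pos : 0 < level.
Proof. apply Rmin_pos; [apply potential_left_pos | apply potential_right_pos]. Qed.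

Lemma level_le_potential z : z <= equil / 2 \/ 2 * equil <= z -> level <= potential z.
Proof.
  pose proof equil_pos. intros [Hz | Hz].
  - assert (Hg : forall x, z <= x <= equil / 2 -> - force_clamped x <= 0)
      by (intros x Hx; pose proof (force_clamped_nonneg x ltac:(lra)); lra).
    pose proof (diff_le_of_derive_le potential _ 0 z (equil / 2) Hz is_derive_potential Hg).
    pose proof (Rmin_l (potential (equil / 2)) (potential (2 * equil))).
    unfold level. lra.
  - assert (Hg : forall x, 2 * equil <= x <= z -> 0 <= - force_clamped x)
      by (intros x Hx; pose proof (force_clamped_nonpos x ltac:(lra)); lra).
    pose proof (diff_ge_of_derive_ge potential _ 0 (2 * equil) z Hz is_derive_potential Hg).
    pose proof (Rmin_r (potential (equil / 2)) (potential (2 * equil))).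
    unfold level. lra.
Qed.

Lemma potential_small_near_equil :
  exists d, 0 < d /\ forall z, Rabs (z - equil) < d -> potential z < level / 4.
Proof.
  pose proof level_pos.
  destruct (proj2 (continuity_pt_filterlim _ _)
              (continuous_of_is_derive _ _ _ (is_derive_potential equil)) (level / 4))
    as [d [Hd Hnear]]; [lra |].
  exists d. split; [exact Hd |]. intros z Hz.
  destruct (Req_dec z equil) as [-> | Hne]; [rewrite potential_equil; lra |].
  specialize (Hnear z (conj (conj I (not_eq_sym Hne)) Hz)). simpl in Hnear. unfold R_dist in Hnear.
  rewrite potential_equil, Rminus_0_r in Hnear. pose proof (Rle_abs (potential z)). lra.
Qed.

Section Orbit.
Variables w w1 : R -> R.
Hypothesis w_0 : w 0 = equil.
Hypothesis w1_0 : w1 0 = sqrt level.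
Hypothesis w_deriv : forall t, is_derive w t (w1 t).
Hypothesis w1_deriv : forall t, is_derive w1 t (force_clamped (w t)).

Lemma orbit_energy t : w1 t ^ 2 + 2 * potential (w t) = level.
Proof.
  assert (Hd : forall t, is_derive (fun t => w1 t ^ 2 + 2 * potential (w t)) t 0).
  { intros s. auto_derive.
    - repeat split; [exists (force_clamped (w s)); apply w1_deriv |
                     exists (- force_clamped (w s)); apply is_derive_potential |
                     exists (w1 s); apply w_deriv].
    - change (fun x => w1 x) with w1; change (fun x => w x) with w;
      change (fun x => potential x) with potential.
      rewrite (is_derive_unique _ _ _ (w1_deriv s)), (is_derive_unique _ _ _ (w_deriv s)),
        (is_derive_unique _ _ _ (is_derive_potential (w s))).
      ring. }
  rewrite (derive_zero_const _ Hd t), w_0, w1_0, potential_equil, pow2_sqrt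
    by (apply Rlt_le, level_pos).
  ring.
Qed.

Lemma orbit_bounds t : equil / 2 < w t < 2 * equil.
Proof.
  pose proof (orbit_energy t). pose proof (pow2_ge_0 (w1 t)). pose proof level_pos.
  assert (Hlow : potential (w t) < level) by lra.
  split; apply Rnot_le_lt; intros Hout; apply (Rlt_not_le _ _ Hlow), level_le_potential; auto.
Qed.

Lemma orbit_force t : force_clamped (w t) = force (w t).
Proof.
  unfold force_clamped. rewrite clamp_id; [reflexivity |]. pose proof (orbit_bounds t). lra.
Qed.

Lemma orbit_slow_far : exists d, 0 < d /\
  forall t, w1 t ^ 2 <= level / 2 -> d <= Rabs (w t - equil).
Proof.
  destruct potential_small_near_equil as [d [Hd Hsmall]].
  exists d. split; [exact Hd |]. intros t Hslow.
  apply Rnot_lt_le. intros Hnear. pose proof (Hsmall _ Hnear). pose proof (orbit_energy t). lra.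
Qed.

Lemma orbit_above T : exists t, t < T /\ equil < w t.
Proof.
  pose proof equil_pos. pose proof level_pos.
  destruct orbit_slow_far as [d [Hd Hfar]].
  apply NNPP. intros Hno.
  assert (Hle : forall t, t <= T - 1 -> w t <= equil).
  { intros t Ht. apply Rnot_lt_le. intros Hlt. apply Hno. exists t. split; [lra | exact Hlt]. }
  set (b := equil - Rmin d (equil / 2)).
  assert (Hb : equil / 2 <= b < equil)
    by (pose proof (Rmin_r d (equil / 2)); pose proof (Rmin_pos d (equil / 2) Hd ltac:(lra));
        unfold b; lra).
  destruct (force_ge_pos (equil / 2) b) as [kap [Hkap Hforce]]; [lra | lra |].
  apply (bounded_concave_ray_not_strict (fun t => - w t) (fun t => - w1 t)
           (fun t => - force_clamped (w t)) (T - 1) (2 * equil)) with kap (level / 2); try lra.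
  - intros t. apply (is_derive_opp w), w_deriv.
  - intros t. apply (is_derive_opp w1), w1_deriv.
  - intros t _. pose proof (orbit_bounds t). rewrite Rabs_Ropp, Rabs_pos_eq; lra.
  - intros t Ht. pose proof (force_clamped_nonneg _ (Hle t Ht)). lra.
  - intros t Ht Hslow. rewrite orbit_force.
    pose proof (Hfar t ltac:(simpl in *; lra)). pose proof (Hle t Ht). pose proof (orbit_bounds t).
    rewrite Rabs_left1 in * by lra. pose proof (Rmin_l d (equil / 2)).
    pose proof (Hforce (w t) ltac:(unfold b; lra)). lra.
Qed.

Lemma orbit_below T : exists t, t < T /\ w t < equil.
Proof.
  pose proof equil_pos. pose proof level_pos.
  destruct orbit_slow_far as [d [Hd Hfar]].
  apply NNPP. intros Hno.
  assert (Hge : forall t, t <= T - 1 -> equil <= w t).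
  { intros t Ht. apply Rnot_lt_le. intros Hlt. apply Hno. exists t. split; [lra | exact Hlt]. }
  destruct (force_le_neg (equil + d)) as [kap [Hkap Hforce]]; [lra |].
  apply (bounded_concave_ray_not_strict w w1 (fun t => force_clamped (w t))
           (T - 1) (2 * equil)) with kap (level / 2); try lra; auto.
  - intros t _. pose proof (orbit_bounds t). rewrite Rabs_pos_eq; lra.
  - intros t Ht. apply force_clamped_nonpos, Hge, Ht.
  - intros t Ht Hslow. rewrite orbit_force.
    pose proof (Hfar t Hslow). pose proof (Hge t Ht).
    rewrite Rabs_pos_eq in * by lra. apply Hforce. lra.
Qed.

Lemma orbit_not_convergent : ~ exists l : R, is_lim w m_infty l.
Proof.
  intros [l Hl].
  assert (Hc : l = equil)
    by exact (is_lim_m_infty_oscillating w l equil Hl orbit_above orbit_below).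
  subst l. pose proof level_pos.
  (* A difference quotient of w far to the left gives a time where both w' and
     [potential w] are small, against conservation of energy. *)
  destruct potential_small_near_equil as [d [Hd Hsmall]].
  set (q := Rmin d (Rmin 1 (level / 2))).
  assert (Hq : 0 < q) by (apply Rmin_pos; [| apply Rmin_pos]; lra).
  assert (Hqd : q <= d) by apply Rmin_l.
  assert (Hq1 : q <= 1) by (eapply Rle_trans; [apply Rmin_r | apply Rmin_l]).
  assert (Hql : q <= level / 2) by (eapply Rle_trans; [apply Rmin_r | apply Rmin_r]).
  destruct (is_lim_m_infty_eventually w equil (q / 2) Hl ltac:(lra)) as [T HT].
  destruct (MVT_is_derive w w1 (T - 2) (T - 1)) as [xi [Hxi Hmvt]]; [lra | exact w_deriv |].
  replace (T - 1 - (T - 2)) with 1 in Hmvt by ring.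
  assert (Hslow : Rabs (w1 xi) < q).
  { rewrite Rmult_1_r in Hmvt. rewrite <- Hmvt.
    pose proof (HT (T - 1) ltac:(lra)). pose proof (HT (T - 2) ltac:(lra)).
    replace (w (T - 1) - w (T - 2)) with ((w (T - 1) - equil) - (w (T - 2) - equil)) by ring.
    eapply Rle_lt_trans; [apply Rabs_triang |]. rewrite Rabs_Ropp. lra. }
  pose proof (Hsmall (w xi) ltac:(pose proof (HT xi ltac:(lra)); lra)).
  pose proof (orbit_energy xi).
  assert (w1 xi ^ 2 < q ^ 2).
  { rewrite <- (pow2_abs (w1 xi)). pose proof (Rabs_pos (w1 xi)). nra. }
  nra.
Qed.

End Orbit.

Theorem oscillating_solution : exists w w1 : R -> R,
  (forall t, is_derive w t (w1 t)) /\
  (forall t, is_derive w1 t (force (w t))) /\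
  (forall t, continuous (fun s => force (w s)) t) /\
  (forall t, equil / 2 < w t < 2 * equil) /\
  (forall T, exists t, t < T /\ equil < w t) /\
  (forall T, exists t, t < T /\ w t < equil) /\
  ~ (exists l : R, is_lim w m_infty l).
Proof.
  destruct force_clamped_bounded as [B HB], force_clamped_lipschitz as [L HL].
  destruct (picard_global_solution force_clamped B L equil (sqrt level) HB HL)
    as [w [w1 [Hw0 [Hw10 [Hw Hw1]]]]].
  pose proof (orbit_force w w1 Hw0 Hw10 Hw Hw1) as Hforce.
  exists w, w1.
  split; [exact Hw |]. split; [| split; [| split; [| split; [| split]]]].
  - intros t. rewrite <- Hforce. apply Hw1.
  - intros t. apply (continuous_ext (fun s => force_clamped (w s))); [exact Hforce |].
    apply continuous_comp;
      [exact (continuous_of_is_derive _ _ _ (Hw t)) | apply continuous_force_clamped].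
  - exact (orbit_bounds w w1 Hw0 Hw10 Hw Hw1).
  - exact (orbit_above w w1 Hw0 Hw10 Hw Hw1).
  - exact (orbit_below w w1 Hw0 Hw10 Hw Hw1).
  - exact (orbit_not_convergent w w1 Hw0 Hw10 Hw Hw1).
Qed.

End Oscillator.

(** * The substitution u(x) = sqrt x * w(ln x) *)

Lemma filterlim_exp_m_infty : filterlim exp (Rbar_locally' m_infty) (at_right 0).
Proof.
  intros P [e He]. exists (ln e). intros t Ht. apply He.
  - change (Rabs (exp t - 0) < e). rewrite Rminus_0_r, Rabs_pos_eq by apply Rlt_le, exp_pos.
    rewrite <- (exp_ln e) by apply cond_pos. apply exp_increasing, Ht.
  - apply exp_pos.
Qed.

Definition sqrt_ln_lift (w : R -> R) (x : R) : R := sqrt x * w (ln x).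

Section SqrtLnLift.
Variables w w1 w2 : R -> R.
Hypothesis w_deriv : forall t, is_derive w t (w1 t).
Hypothesis w1_deriv : forall t, is_derive w1 t (w2 t).
Hypothesis w2_continuous : forall t, continuous w2 t.

Let u1 (x : R) : R := (w (ln x) / 2 + w1 (ln x)) / sqrt x.
Let u2 (x : R) : R := (w2 (ln x) - w (ln x) / 4) / (x * sqrt x).

Let locally_pos x : 0 < x -> locally x (fun y => 0 < y).
Proof.
  intros Hx. exists (mkposreal x Hx). intros y Hy. change (Rabs (y - x) < x) in Hy.
  apply Rabs_def2 in Hy. lra.
Qed.

Let is_derive_lift x : 0 < x -> is_derive (sqrt_ln_lift w) x (u1 x).
Proof.
  intros Hx. unfold sqrt_ln_lift, u1. auto_derive.
  - repeat split; try exact Hx. exists (w1 (ln x)). apply w_deriv.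
  - change (fun t => w t) with w. rewrite (is_derive_unique _ _ _ (w_deriv (ln x))).
    assert (Hs : 0 < sqrt x) by (apply sqrt_lt_R0, Hx).
    assert (Hx2 : x = sqrt x * sqrt x) by (rewrite sqrt_sqrt; lra).
    set (W := w (ln x)). set (W1 := w1 (ln x)). set (s := sqrt x) in *.
    rewrite Hx2. field. lra.
Qed.

Let is_derive_lift1 x : 0 < x -> is_derive u1 x (u2 x).
Proof.
  intros Hx. unfold u1, u2.
  assert (Hs : 0 < sqrt x) by (apply sqrt_lt_R0, Hx).
  auto_derive.
  - repeat split; try lra; [exists (w1 (ln x)); apply w_deriv | exists (w2 (ln x)); apply w1_deriv].
  - change (fun t => w t) with w. change (fun t => w1 t) with w1.
    rewrite (is_derive_unique _ _ _ (w_deriv (ln x))), (is_derive_unique _ _ _ (w1_deriv (ln x))).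
    assert (Hx2 : x = sqrt x * sqrt x) by (rewrite sqrt_sqrt; lra).
    set (W := w (ln x)). set (W1 := w1 (ln x)). set (W2 := w2 (ln x)). set (s := sqrt x) in *.
    rewrite Hx2. field. lra.
Qed.

Let Derive_lift x : 0 < x -> Derive (sqrt_ln_lift w) x = u1 x.
Proof. intros Hx. apply is_derive_unique, is_derive_lift, Hx. Qed.

Lemma Derive2_sqrt_ln_lift x : 0 < x ->
  Derive (Derive (sqrt_ln_lift w)) x = (w2 (ln x) - w (ln x) / 4) / (x * sqrt x).
Proof.
  intros Hx. rewrite (Derive_ext_loc _ u1).
  - apply is_derive_unique, is_derive_lift1, Hx.
  - apply (filter_imp (fun y => 0 < y)); [apply Derive_lift | apply locally_pos, Hx].
Qed.

Lemma C2_pos_sqrt_ln_lift : C2_pos (sqrt_ln_lift w).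
Proof.
  split; [| split]; intros x Hx.
  - exists (u1 x). apply is_derive_lift, Hx.
  - exists (u2 x). apply (is_derive_ext_loc u1); [| apply is_derive_lift1, Hx].
    apply (filter_imp (fun y => 0 < y)); [| apply locally_pos, Hx].
    intros y Hy. symmetry. apply Derive_lift, Hy.
  - apply (continuous_ext_loc _ u2).
    + apply (filter_imp (fun y => 0 < y)); [| apply locally_pos, Hx].
      intros y Hy. symmetry. apply Derive2_sqrt_ln_lift, Hy.
    + assert (Hln : continuous ln x) by exact (continuous_of_is_derive _ _ _ (is_derive_ln x Hx)).
      assert (Hs : 0 < sqrt x) by (apply sqrt_lt_R0, Hx).
      apply continuous_mult_R.
      * apply continuous_minus_R.
        -- apply continuous_comp; [exact Hln | apply w2_continuous].
        -- apply continuous_mult_R; [| apply continuous_const].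
           apply continuous_comp; [exact Hln | exact (continuous_of_is_derive _ _ _ (w_deriv _))].
      * apply continuous_of_ex_derive. auto_derive. repeat split; try lra.
        apply Rgt_not_eq, Rmult_lt_0_compat; lra.
Qed.

End SqrtLnLift.

Lemma Rpower_sigma_mul_sqrt sigma p x z : p = -3 - 2 * sigma -> 0 < x -> 0 < z ->
  Rpower x sigma * Rpower (sqrt x * z) p = Rpower z p / (x * sqrt x).
Proof.
  intros Hp Hx Hz. assert (Hs : 0 < sqrt x) by (apply sqrt_lt_R0, Hx).
  rewrite <- (Rpower_mult_distr _ _ _ Hs Hz), <- (Rpower_sqrt x Hx), Rpower_mult, <- Rmult_assoc,
    <- Rpower_plus.
  replace (sigma + / 2 * p) with (- (1 + / 2)) by (rewrite Hp; field).
  rewrite Rpower_Ropp, Rpower_plus, Rpower_1 by exact Hx. field. split.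
  - unfold Rpower. apply Rgt_not_eq, exp_pos.
  - lra.
Qed.

Section EmdenFowler.
Variables (sigma p : R) (w w1 : R -> R).
Hypothesis p_gt1 : 1 < p.
Hypothesis a_half : expo_a sigma p = 1 / 2.
Hypothesis w_deriv : forall t, is_derive w t (w1 t).
Hypothesis w1_deriv : forall t, is_derive w1 t (force p (w t)).
Hypothesis w_bounds : forall t, equil p / 2 < w t < 2 * equil p.

Let u := sqrt_ln_lift w.

Lemma p_of_expo_a_half : p = -3 - 2 * sigma.
Proof.
  unfold expo_a in a_half. apply (f_equal (fun z => z * (1 - p))) in a_half.
  unfold Rdiv in a_half. rewrite Rmult_assoc, Rinv_l in a_half by lra. lra.
Qed.

Lemma u_a_of_expo_a_half x : 0 < x -> u_a sigma p x = equil p * sqrt x.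
Proof.
  intros Hx. unfold u_a, c_a, equil. rewrite a_half, <- Rpower_sqrt by exact Hx.
  f_equal; [f_equal; field | f_equal; field].
Qed.

Lemma sqrt_ln_lift_solves_emden_fowler x : 0 < x ->
  Derive (Derive u) x + Rpower x sigma * Rpower (u x) p = 0.
Proof.
  intros Hx. pose proof (w_bounds (ln x)). pose proof (equil_pos p).
  unfold u. rewrite (Derive2_sqrt_ln_lift w w1 (fun t => force p (w t))) by assumption.
  unfold sqrt_ln_lift. rewrite (Rpower_sigma_mul_sqrt sigma) by (try apply p_of_expo_a_half; lra).
  assert (Hs : 0 < sqrt x) by (apply sqrt_lt_R0, Hx).
  unfold force. field. lra.
Qed.

Lemma sqrt_ln_lift_pos x : 0 < x -> 0 < u x.
Proof.
  intros Hx. pose proof (w_bounds (ln x)). pose proof (equil_pos p).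
  apply Rmult_lt_0_compat; [apply sqrt_lt_R0, Hx | lra].
Qed.

Lemma sqrt_ln_lift_ratio x : 0 < x -> u x / u_a sigma p x = w (ln x) / equil p.
Proof.
  intros Hx. rewrite u_a_of_expo_a_half by exact Hx. pose proof (equil_pos p).
  assert (0 < sqrt x) by (apply sqrt_lt_R0, Hx). unfold u, sqrt_ln_lift. field. lra.
Qed.

Lemma sqrt_ln_lift_ratio_bounded : exists M, forall x, 0 < x -> Rabs (u x / u_a sigma p x) <= M.
Proof.
  exists 2. intros x Hx. rewrite sqrt_ln_lift_ratio by exact Hx.
  pose proof (w_bounds (ln x)). pose proof (equil_pos p).
  rewrite Rabs_pos_eq by (apply Rdiv_le_0_compat; lra).
  apply Rmult_le_reg_r with (equil p); [lra |]. field_simplify; lra.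
Qed.

Lemma sqrt_ln_lift_sub_u_a_changes_sign :
  (forall T, exists t, t < T /\ equil p < w t) -> (forall T, exists t, t < T /\ w t < equil p) ->
  changes_sign_inf_near_0 (fun x => u x - u_a sigma p x).
Proof.
  intros Habove Hbelow eps Heps.
  assert (Hdiff : forall t, u (exp t) - u_a sigma p (exp t) = sqrt (exp t) * (w t - equil p)).
  { intros t. rewrite u_a_of_expo_a_half by apply exp_pos.
    unfold u, sqrt_ln_lift. rewrite ln_exp. ring. }
  assert (Hsmall : forall t, t < ln eps -> 0 < exp t < eps).
  { intros t Ht. split; [apply exp_pos |].
    rewrite <- (exp_ln eps Heps). apply exp_increasing, Ht. }
  destruct (Habove (ln eps)) as [t1 [Ht1 Hw1]], (Hbelow (ln eps)) as [t2 [Ht2 Hw2]].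
  pose proof (sqrt_lt_R0 _ (exp_pos t1)). pose proof (sqrt_lt_R0 _ (exp_pos t2)).
  split; [exists (exp t1) | exists (exp t2)]; rewrite Hdiff; split; auto; nra.
Qed.

Lemma sqrt_ln_lift_ratio_not_convergent : ~ (exists l : R, is_lim w m_infty l) ->
  ~ (exists l : R, filterlim (fun x => u x / u_a sigma p x) (at_right 0) (locally l)).
Proof.
  intros Hw [l Hl]. apply Hw. exists (equil p * l). pose proof (equil_pos p).
  apply (is_lim_ext (fun t => equil p * (u (exp t) / u_a sigma p (exp t)))).
  - intros t. rewrite sqrt_ln_lift_ratio, ln_exp by apply exp_pos. field. lra.
  - apply (is_lim_scal_l _ _ _ l).
    exact (filterlim_comp _ _ _ _ _ _ _ _ filterlim_exp_m_infty Hl).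
Qed.

End EmdenFowler.

Theorem theorem5p9 (sigma p : R) :
  sigma < -2 ->
  p > -1 - sigma ->
  expo_a sigma p = 1 / 2 ->
  exists u : R -> R,
    (forall x, 0 < x -> 0 < u x) /\
    C2_pos u /\
    (forall x, 0 < x ->
       Derive (Derive u) x + Rpower x sigma * Rpower (u x) p = 0) /\
    changes_sign_inf_near_0 (fun x => u x - u_a sigma p x) /\
    (exists M : R, forall x, 0 < x -> Rabs (u x / u_a sigma p x) <= M) /\
    ~ (exists l : R,
         filterlim (fun x => u x / u_a sigma p x) (at_right 0) (locally l)).
Proof.
  intros Hsigma Hp Ha.
  assert (Hp1 : 1 < p) by lra.
  destruct (oscillating_solution p Hp1)
    as [w [w1 [Hw [Hw1 [Hcont [Hbounds [Habove [Hbelow Hnolim]]]]]]]].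
  exists (sqrt_ln_lift w). split; [| split; [| split; [| split; [| split]]]].
  - exact (sqrt_ln_lift_pos p w Hbounds).
  - exact (C2_pos_sqrt_ln_lift w w1 _ Hw Hw1 Hcont).
  - exact (sqrt_ln_lift_solves_emden_fowler sigma p w w1 Hp1 Ha Hw Hw1 Hbounds).
  - exact (sqrt_ln_lift_sub_u_a_changes_sign sigma p w Ha Habove Hbelow).
  - exact (sqrt_ln_lift_ratio_bounded sigma p w Ha Hbounds).
  - exact (sqrt_ln_lift_ratio_not_convergent sigma p w Ha Hnolim).
Qed.
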